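(* Let $n$ be even and let $g\in\mathbb{R}^n$, with order statistics $g_{(1)}\le g_{(2)}\le\dots\le g_{(n)}$. Let $\mathcal{S}\subseteq\{1,\dots,n\}$ be a solution of $$\max_{S\subseteq\{1,\dots,n\}}\ \sum_{i\in S} g_i\quad\text{subject to}\quad \sum_{i\in S} g_i\le\tfrac12\sum_{i=1}^n g_i,\quad |S|=\tfrac n2 .$$ Then $$\Big(\sum_{i\in\mathcal{S}}g_i-\sum_{i\in\mathcal{S}^c}g_i\Big)^2\le\sum_{i=1}^{n/2}\big(g_{(2i)}-g_{(2i-1)}\big)^2 .$$
   Context: In the paper $g_i=\mathbb{E}[Y_i(1)+Y_i(0)\mid X_i]$ for units with covariates $X_i$ and potential outcomes $Y_i(1),Y_i(0)$; the left side (divided by $n^2$) is the design-dependent part of the conditional variance of the IPW estimator under the design that assigns treatment $Z^*\sim\mathrm{Bern}(1/2)$ to all of $\mathcal{S}$ and $1-Z^*$ to all of $\mathcal{S}^c$, and the right side (divided by $n^2$) is the corresponding term for the matched-pair design pairing consecutive units sorted by $g$. $\mathcal{S}^c$ denotes the complement of $\mathcal{S}$ in $\{1,\dots,n\}$. *)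

From mathcomp Require Import all_boot all_order all_algebra.
Set Implicit Arguments. Unset Strict Implicit. Unset Printing Implicit Defensive.
Import Order.TTheory GRing.Theory Num.Theory.
Local Open Scope ring_scope.

(* Values g_1..g_n sorted nondecreasingly: (order_stats g)`_k = g_(k+1). *)
Definition order_stats (R : realFieldType) (n : nat) (g : 'I_n -> R) : seq R :=
  sort <=%R [seq g i | i <- enum 'I_n].

Definition feasible (R : realFieldType) (n : nat) (g : 'I_n -> R) (S : {set 'I_n}) : Prop :=
  #|S| = n./2 /\ \sum_(i in S) g i <= 2^-1 * \sum_i g i.

Definition is_solution (R : realFieldType) (n : nat) (g : 'I_n -> R) (S : {set 'I_n}) : Prop :=
  feasible g S /\ forall T : {set 'I_n}, feasible g T -> \sum_(i in T) g i <= \sum_(i in S) g i.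

(* Split the sorted values into the consecutive pairs (g_(2i-1), g_(2i)) with gaps
   d_i.  Choosing the signs of the d_i greedily, each new sign opposite to the
   running signed sum, gives signs with 0 <= sum_i e_i d_i and
   (sum_i e_i d_i)^2 <= sum_i d_i^2.  Taking from the i-th pair its smaller element
   when e_i = +1 and its larger one otherwise yields a set U of size n/2 with
   sum g - 2 sum_U g = sum_i e_i d_i >= 0, so U is feasible.  Optimality of S then
   gives 0 <= sum g - 2 sum_S g <= sum_i e_i d_i, and the left-hand side of the
   theorem is the square of sum g - 2 sum_S g. *)

From mathcomp Require Import all_boot all_order all_algebra perm.
From mathcomp Require Import lra.
Set Implicit Arguments. Unset Strict Implicit. Unset Printing Implicit Defensive.
Import Order.TTheory GRing.Theory Num.Theory.
Local Open Scope ring_scope.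

Lemma big_ord_double (T : Type) (idx : T) (op : Monoid.com_law idx) m
    (F : nat -> T) :
  \big[op/idx]_(k < m.*2) F k = \big[op/idx]_(i < m) op (F i.*2) (F i.*2.+1).
Proof.
elim: m => [|m IHm]; first by rewrite !big_ord0.
by rewrite doubleS !big_ord_recr /= IHm Monoid.mulmA.
Qed.

Lemma big_ord_double_pick (T : Type) (idx : T) (op : Monoid.com_law idx) m
    (e : nat -> bool) (F : nat -> T) :
  \big[op/idx]_(k < m.*2 | odd k != e k./2) F k
    = \big[op/idx]_(i < m) F (if e i then i.*2 else i.*2.+1).
Proof.
rewrite big_mkcond (big_ord_double op m (fun k => if odd k != e k./2 then F k else idx)).
apply: eq_bigr => i _.
by rewrite /= odd_double half_double uphalf_double; case: (e i); rewrite Monoid.simpm.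
Qed.

Lemma balanced_signs (R : realDomainType) (d : nat -> R) m : exists e : nat -> bool,
  (\sum_(i < m) (if e i then d i else - d i)) ^+ 2 <= \sum_(i < m) d i ^+ 2.
Proof.
elim: m => [|m [e He]]; first by exists xpredT; rewrite !big_ord0 expr0n.
set x := \sum_(i < m) _ in He.
exists (fun i => if i == m then x * d m <= 0 else e i).
rewrite !big_ord_recr /= eqxx.
have -> : \sum_(i < m) (if (if i == m :> nat then x * d m <= 0 else e i)
                        then d i else - d i) = x.
  by apply: eq_bigr => i _; rewrite ltn_eqF.
by case: ifPn => [|/negbTE]; rewrite -?ltNge; nra.
Qed.

Lemma balanced_signs_ge0 (R : realDomainType) (d : nat -> R) m :
  exists e : nat -> bool,
    0 <= \sum_(i < m) (if e i then d i else - d i) /\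
    (\sum_(i < m) (if e i then d i else - d i)) ^+ 2 <= \sum_(i < m) d i ^+ 2.
Proof.
have [e He] := balanced_signs d m.
set x := \sum_(i < m) _ in He.
have [x_ge0|x_lt0] := leP 0 x; first by exists e.
exists (fun i => ~~ e i).
have -> : \sum_(i < m) (if ~~ e i then d i else - d i) = - x.
  by rewrite /x -sumrN; apply: eq_bigr => i _; case: (e i); rewrite ?opprK.
by rewrite sqrrN oppr_ge0 ltW.
Qed.

Lemma order_stats_perm (R : realFieldType) n (g : 'I_n -> R) :
  exists s : 'S_n, forall k : 'I_n, (order_stats g)`_k = g (s k).
Proof.
have /tuple_permP[s stats_eq] : perm_eq (order_stats g) (map_tuple g (ord_tuple n)).
  by rewrite /order_stats perm_sort.
exists s => k.
by rewrite stats_eq -tnth_nth tnth_mktuple tnth_map tnth_ord_tuple.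
Qed.

Definition pair_gap (R : realFieldType) n (g : 'I_n -> R) (i : nat) : R :=
  (order_stats g)`_i.*2.+1 - (order_stats g)`_i.*2.

Lemma exists_pair_transversal (R : realFieldType) n (g : 'I_n -> R)
    (e : nat -> bool) :
  ~~ odd n ->
  exists U : {set 'I_n}, #|U| = n./2 /\
    \sum_i g i - 2 * \sum_(i in U) g i
      = \sum_(i < n./2) (if e i then pair_gap g i else - pair_gap g i).
Proof.
move=> n_even; set m := n./2.
have n_eq : n = m.*2 by rewrite -[LHS]odd_double_half (negbTE n_even).
clearbody m; subst n.
pose f k := (order_stats g)`_k.
have [s stats_s] := order_stats_perm g.
have s_inj : injective s := @perm_inj _ s.
pose P k := odd k != e k./2.
pose U := s @: [set k : 'I_m.*2 | P k].
exists U; split.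
  rewrite card_imset // -sum1dep_card (big_ord_double_pick _ _ e (fun=> 1%N)).
  by rewrite sum1_card card_ord.
have sum_g : \sum_i g i = \sum_(i < m) (f i.*2 + f i.*2.+1).
  rewrite (reindex_inj s_inj) -(big_ord_double _ m f).
  by apply: eq_bigr => k _; rewrite /f stats_s.
have sum_U : \sum_(i in U) g i
             = \sum_(i < m) f (if e i then i.*2 else i.*2.+1).
  rewrite big_imset; last by move=> i j _ _; apply: s_inj.
  rewrite -(big_ord_double_pick _ m e f).
  by apply: eq_big => [k|k _]; rewrite ?inE ?stats_s.
rewrite sum_g sum_U mulr_sumr -sumrB; apply: eq_bigr => i _.
by rewrite /pair_gap -/(f _) -/(f _); case: (e i); lra.
Qed.

Theorem theorem2 (R : realFieldType) (n : nat) (hn : ~~ odd n)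
    (g : 'I_n -> R) (S : {set 'I_n}) (hS : is_solution g S) :
  (\sum_(i in S) g i - \sum_(i in ~: S) g i) ^+ 2
  <= \sum_(i < n./2) ((order_stats g)`_(i.*2.+1) - (order_stats g)`_(i.*2)) ^+ 2.
Proof.
case: hS => [[_ S_le_half] S_max].
have [e [X_ge0 X_sqr]] := balanced_signs_ge0 (pair_gap g) n./2.
have [U [U_card U_sum]] := exists_pair_transversal g e hn.
have U_le_S : \sum_(i in U) g i <= \sum_(i in S) g i.
  by apply: S_max; split => //; lra.
have sum_split : \sum_i g i = \sum_(i in S) g i + \sum_(i in ~: S) g i.
  by rewrite (bigID [in S]) /=; congr (_ + _); apply: eq_bigl => i; rewrite inE.
rewrite -/(pair_gap g _); nra.
Qed.
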